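(* Let $G$ be a graph, let $C=a_{1}a_{2}a_{3}a_{1}$ be a triangle of $G$, and let $M_{1},M_{2}$ be two paths in $G$ each with exactly $2$ vertices (i.e. edges). Suppose $C$, $M_{1}$, $M_{2}$ are pairwise vertex-disjoint and $e(V(C),V(M_{1})\cup V(M_{2}))\geq 9$. Then $G[V(C)\cup V(M_{1})\cup V(M_{2})]$ contains vertex-disjoint subgraphs $C'$ and $D$, where $C'$ is a triangle and $D$ has exactly $4$ vertices and at least $4$ edges.
   Context: All graphs are finite, simple and undirected. For disjoint vertex sets $L,M$, $e(L,M)$ is the number of edges of $G$ with one end in $L$ and the other in $M$. For $U\subseteq V(G)$, $G[U]$ is the subgraph induced by $U$. *)

From mathcomp Require Import all_boot.
Set Implicit Arguments. Unset Strict Implicit. Unset Printing Implicit Defensive.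

Definition simple_graph (T : finType) (e : rel T) :=
  symmetric e /\ irreflexive e.

(* e(L,M): number of edges with one end in L and the other in M
   (L, M disjoint), counted as ordered pairs (x,y), x in L, y in M. *)
Definition e_between (T : finType) (e : rel T) (L M : {set T}) : nat :=
  #|[set p : T * T | (p.1 \in L) && (p.2 \in M) && e p.1 p.2]|.

Definition is_edge_of (T : finType) (e : rel T) (f : {set T}) :=
  exists x y, x != y /\ e x y /\ f = [set x; y].

Definition subgraph_in (T : finType) (e : rel T) (U D : {set T})
  (F : {set {set T}}) :=
  D \subset U /\ forall f, f \in F -> is_edge_of e f /\ f \subset D.

Definition triangle_in (T : finType) (e : rel T) (U K : {set T}) :=
  exists x y z, [/\ K = [set x; y; z], x != y, y != z, x != z &
    [/\ e x y, e y z, e x z & K \subset U]].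

From mathcomp Require Import all_boot zify.
Set Implicit Arguments. Unset Strict Implicit.

(* Nine of the twelve possible edges between C and M1 u M2 are present.  Hence
   some vertex a_i of C is adjacent to both ends of one path while the other
   two vertices of C send at least two edges to the other path.  Then a_i with
   the first path is the triangle C', and the other two vertices of C with the
   second path span the edge of C, the edge of the path and two cross edges. *)

Lemma card_set_uniq (T : finType) (s : seq T) : uniq s -> #|[set x in s]| = size s.
Proof. by rewrite cardsE => /card_uniqP. Qed.

(* Read d_i (resp. d_i') as the number of neighbours of a_i on M1 (resp. M2). *)
Lemma complete_vertex_pigeonhole (d1 d2 d3 d1' d2' d3' : nat) :
  d1 <= 2 -> d2 <= 2 -> d3 <= 2 -> d1' <= 2 -> d2' <= 2 -> d3' <= 2 ->
  9 <= d1 + (d2 + d3) + (d1' + (d2' + d3')) ->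
  d1 = 2 /\ 1 < d2' + d3' \/ d2 = 2 /\ 1 < d1' + d3' \/ d3 = 2 /\ 1 < d1' + d2' \/
  d1' = 2 /\ 1 < d2 + d3 \/ d2' = 2 /\ 1 < d1 + d3 \/ d3' = 2 /\ 1 < d1 + d2.
Proof. lia. Qed.

Section Graph.
Variables (T : finType) (e : rel T).

Lemma e_between_seq (L M : seq T) : uniq L -> uniq M ->
  e_between e [set x in L] [set y in M] = \sum_(x <- L) \sum_(y <- M) e x y.
Proof.
move=> uL uM; rewrite big_uniq //=.
under eq_bigr do rewrite big_uniq //=.
rewrite pair_big /e_between -sum1dep_card big_mkcond [RHS]big_mkcond /=.
by apply: eq_bigr => -[x y] _; rewrite !inE /=; case: (_ && _) (e x y) => -[].
Qed.

Lemma e_between_pairs (y z r s : T) : y != z -> r != s ->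
  e_between e [set y; z] [set r; s] = e y r + e y s + (e z r + e z s).
Proof.
move=> yz rs; have set2E (u v : T) : [set u; v] = [set w in [:: u; v]].
  by apply/setP => w; rewrite !inE.
by rewrite !set2E e_between_seq /= ?inE ?andbT // !big_cons !big_nil !addn0.
Qed.

Lemma e_between_triple_pairs (a1 a2 a3 b1 b2 c1 c2 : T) :
  uniq [:: a1; a2; a3] -> uniq [:: b1; b2; c1; c2] ->
  e_between e [set a1; a2; a3] ([set b1; b2] :|: [set c1; c2]) =
  e a1 b1 + e a1 b2 + (e a2 b1 + e a2 b2 + (e a3 b1 + e a3 b2)) +
  (e a1 c1 + e a1 c2 + (e a2 c1 + e a2 c2 + (e a3 c1 + e a3 c2))).
Proof.
move=> uA uB; have -> : [set a1; a2; a3] = [set v in [:: a1; a2; a3]].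
  by apply/setP => v; rewrite !inE -!orbA.
have -> : [set b1; b2] :|: [set c1; c2] = [set v in [:: b1; b2; c1; c2]].
  by apply/setP => v; rewrite !inE -!orbA.
rewrite e_between_seq //.
under eq_bigr do rewrite -[[:: b1, b2 & _]]/([:: b1; b2] ++ [:: c1; c2]) big_cat.
by rewrite big_split /= !big_cons !big_nil !addn0.
Qed.

Hypothesis e_irr : irreflexive e.

Lemma edge_of_adj (x y : T) : e x y -> is_edge_of e [set x; y].
Proof.
move=> exy; exists x, y; split=> //.
by apply: contraTneq exy => ->; rewrite e_irr.
Qed.

Lemma set2_cross_inj (L M : {set T}) (u1 v1 u2 v2 : T) : [disjoint L & M] ->
  u1 \in L -> v1 \in M -> u2 \in L -> v2 \in M ->
  [set u1; v1] = [set u2; v2] -> (u1, v1) = (u2, v2).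
Proof.
move=> LM u1L v1M u2L v2M E.
have: u1 \in [set u2; v2] by rewrite -E set21.
have: v1 \in [set u2; v2] by rewrite -E set22.
rewrite !inE => /orP[/eqP v1u2|/eqP->] /orP[/eqP->|/eqP u1v2] //.
- by move: (disjointFr LM u2L); rewrite -v1u2 v1M.
- by move: (disjointFr LM u2L); rewrite -v1u2 v1M.
- by move: (disjointFr LM u1L); rewrite u1v2 v2M.
Qed.

Lemma dense_quadruple (y z r s : T) : uniq [:: y; z; r; s] -> e y z -> e r s ->
  1 < e y r + e y s + (e z r + e z s) ->
  exists2 F, subgraph_in e [set v in [:: y; z; r; s]] [set v in [:: y; z; r; s]] F
           & 4 <= #|F|.
Proof.
set P := [set y; z]; set Q := [set r; s]; set D := [set v in _].
move=> /and4P[]; rewrite !inE => /norP[yz /norP[yr ys]] /norP[zr zs] rs _ eyz ers.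
rewrite -e_between_pairs // /e_between => /card_gt1P[[u1 v1] [[u2 v2] []]].
rewrite !inE /= => /andP[/andP[u1P v1Q] e1] /andP[/andP[u2P v2Q] e2] neq12.
have PQ : [disjoint P & Q].
  apply/pred0P => w /=; rewrite !inE; apply/negP.
  by case/andP=> /orP[]/eqP-> /orP[]/eqP E; rewrite E eqxx in yr ys zr zs.
have sub_D a b : (a \in P) || (a \in Q) -> (b \in P) || (b \in Q) -> [set a; b] \subset D.
  by rewrite !inE -!orbA => aD bD; apply/subsetP => w; rewrite !inE => /orP[]/eqP->.
have neq_by w (A B : {set T}) : w \in A -> w \notin B -> A != B.
  by move=> wA; apply: contraNneq => <-.
exists [set f in [:: P; Q; [set u1; v1]; [set u2; v2]]].
  split=> // f; rewrite !inE => /or4P[]/eqP->; split; try exact: edge_of_adj;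
    apply: sub_D; rewrite !inE ?eqxx ?u1P ?u2P ?v1Q ?v2Q ?orbT //.
rewrite card_set_uniq //= !inE !negb_or -!andbA !andbT; apply/and4P; split.
- by apply: (neq_by y); rewrite !inE ?eqxx // negb_or yr ys.
- by rewrite eq_sym; apply: (neq_by v1); rewrite ?set22 // (disjointFl PQ) // !inE.
- by rewrite eq_sym; apply: (neq_by v2); rewrite ?set22 // (disjointFl PQ) // !inE.
apply/and3P; split.
- by rewrite eq_sym; apply: (neq_by u1); rewrite ?set21 // (disjointFr PQ) // !inE.
- by rewrite eq_sym; apply: (neq_by u2); rewrite ?set21 // (disjointFr PQ) // !inE.
- by apply: contra_neq neq12; apply: (set2_cross_inj PQ); rewrite !inE.
Qed.

Lemma triangle_and_dense_quadruple (U : {set T}) (x p q y z r s : T) :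
  uniq [:: x; p; q; y; z; r; s] -> {subset [:: x; p; q; y; z; r; s] <= U} ->
  e x p -> e x q -> e p q -> e y z -> e r s -> 1 < e y r + e y s + (e z r + e z s) ->
  exists (K D : {set T}) (F : {set {set T}}),
    [/\ triangle_in e U K, subgraph_in e U D F, [disjoint K & D],
        #|D| = 4 & 4 <= #|F|].
Proof.
rewrite -[[:: x, p, q & _]]/([:: x; p; q] ++ [:: y; z; r; s]).
rewrite cat_uniq => /and3P[uK dKD uD] sU exp exq epq eyz ers cross.
have [F [_ FD] F4] := dense_quadruple uD eyz ers cross.
exists [set x; p; q], [set v in [:: y; z; r; s]], F; split=> //.
- move: uK; rewrite /= !inE negb_or andbT => /andP[/andP[xp xq] pq].
  exists x, p, q; split=> //; split=> //.
  apply/subsetP => w wK; apply: sU; rewrite mem_cat; apply/orP; left.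
  by rewrite !inE -orbA in wK *.
- split=> //; apply/subsetP => w; rewrite inE => wD.
  by apply: sU; rewrite mem_cat wD orbT.
- apply/pred0P => w /=; apply/negP => /andP[wK]; rewrite inE => wD.
  move/hasPn: dKD => /(_ w wD)/negP; apply.
  by rewrite !inE -orbA in wK *.
- exact: card_set_uniq.
Qed.
End Graph.

Theorem lemma5 (T : finType) (e : rel T) (a1 a2 a3 b1 b2 c1 c2 : T) :
  simple_graph e ->
  e a1 a2 -> e a2 a3 -> e a3 a1 ->
  e b1 b2 -> e c1 c2 ->
  uniq [:: a1; a2; a3; b1; b2; c1; c2] ->
  9 <= e_between e [set a1; a2; a3] ([set b1; b2] :|: [set c1; c2]) ->
  let U := [set a1; a2; a3; b1; b2; c1; c2] in
  exists (K D : {set T}) (F : {set {set T}}),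
    [/\ triangle_in e U K, subgraph_in e U D F, [disjoint K & D],
        #|D| = 4 & 4 <= #|F|].
Proof.
move=> [e_sym e_irr] e12 e23 e31 eb ec u7 between U.
have e13 : e a1 a3 by rewrite e_sym.
(* The six cases below differ only by a relabelling of the seven vertices. *)
have finish x p q y z r s :
    perm_eq [:: x; p; q; y; z; r; s] [:: a1; a2; a3; b1; b2; c1; c2] ->
    e x p + e x q = 2 -> e p q -> e y z -> e r s ->
    1 < e y r + e y s + (e z r + e z s) ->
  exists (K D : {set T}) (F : {set {set T}}),
    [/\ triangle_in e U K, subgraph_in e U D F, [disjoint K & D],
        #|D| = 4 & 4 <= #|F|].
  move=> perm_s full; have [exp exq] : e x p /\ e x q.
    by case: (e x p) (e x q) full => -[].
  apply: (triangle_and_dense_quadruple e_irr _ _ exp exq) => //.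
    by rewrite (perm_uniq perm_s).
  by move=> v; rewrite (perm_mem perm_s) !inE -!orbA.
have le2 (u v w : T) : e u v + e u w <= 2 by lia.
move: u7 between; rewrite -[[:: a1, a2, a3 & _]]/([:: a1; a2; a3] ++ [:: b1; b2; c1; c2]).
rewrite cat_uniq => /and3P[uA _ uB]; rewrite e_between_triple_pairs //.
move=> /(complete_vertex_pigeonhole (le2 a1 b1 b2) (le2 a2 b1 b2) (le2 a3 b1 b2)
                                   (le2 a1 c1 c2) (le2 a2 c1 c2) (le2 a3 c1 c2)).
move=> [[h1 h2]|[[h1 h2]|[[h1 h2]|[[h1 h2]|[[h1 h2]|[h1 h2]]]]]];
  [ apply: (finish a1 b1 b2 a2 a3 c1 c2) | apply: (finish a2 b1 b2 a1 a3 c1 c2)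
  | apply: (finish a3 b1 b2 a1 a2 c1 c2) | apply: (finish a1 c1 c2 a2 a3 b1 b2)
  | apply: (finish a2 c1 c2 a1 a3 b1 b2) | apply: (finish a3 c1 c2 a1 a2 b1 b2) ];
  by [|apply/permP => P /=; clear - P; lia].
Qed.
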